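(* Let $f:\mathbb{R}^n\times\mathbb{R}^p\to[-\infty,\infty]$ be a proper nearly convex function and $F:\mathbb{R}^n\rightrightarrows\mathbb{R}^p$ a nearly convex set-valued mapping with $\operatorname{ri}(\operatorname{dom} f)\cap\operatorname{ri}(\operatorname{gph} F)\neq\emptyset$. Let $\mu(x)=\inf\{f(x,y):y\in F(x)\}$ and $S(x)=\{y\in F(x): f(x,y)=\mu(x)\}$. Take $\bar x\in\mathbb{R}^n$ with $\mu(\bar x)\in\mathbb{R}$ and $S(\bar x)\neq\emptyset$. Then for every $\bar y\in S(\bar x)$, $$\partial\mu(\bar x)=\bigcup_{(u,v)\in\partial f(\bar x,\bar y)}\big[u+D^*F(\bar x,\bar y)(v)\big].$$
   Context: A set $\Omega\subset\mathbb{R}^k$ is nearly convex if there is a convex set $C$ with $C\subset\Omega\subset\overline{C}$; $\operatorname{ri}\Omega=\{a\in\Omega:\exists\delta>0,\ B(a;\delta)\cap\operatorname{aff}\Omega\subset\Omega\}$. A function is nearly convex if its epigraph $\{(x,\lambda):f(x)\le\lambda\}$ is nearly convex; proper if its domain $\{f<\infty\}$ is nonempty and $f>-\infty$; a set-valued mapping is nearly convex if its graph $\operatorname{gph}F=\{(x,y):y\in F(x)\}$ is. Normal cone: $N(\bar z;\Omega)=\{v:\langle v,z-\bar z\rangle\le0\ \forall z\in\Omega\}$ for $\bar z\in\Omega$. Coderivative: $D^*F(\bar x,\bar y)(v)=\{u\in\mathbb{R}^n:(u,-v)\in N((\bar x,\bar y);\operatorname{gph}F)\}$. Subdifferential of $\varphi$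 at $\bar z$ with $\varphi(\bar z)\in\mathbb{R}$: $\partial\varphi(\bar z)=\{w:\langle w,z-\bar z\rangle\le\varphi(z)-\varphi(\bar z)\ \forall z\}$. *)

(* R^k is modelled as 'rV[R]_k, R : realType. *)
From HB Require Import structures.
From mathcomp Require Import all_boot all_order all_algebra.
From mathcomp Require Import all_classical all_reals all_analysis.
Set Implicit Arguments. Unset Strict Implicit. Unset Printing Implicit Defensive.
Import Order.TTheory GRing.Theory Num.Theory.
Import numFieldNormedType.Exports.
Local Open Scope classical_set_scope.
Local Open Scope ring_scope.

Section Defs.
Variable R : realType.

Definition dotv k (u v : 'rV[R]_k) : R := \sum_(i < k) u 0 i * v 0 i.

Definition eball k (a : 'rV[R]_k) (delta : R) : set 'rV[R]_k :=
  [set z | dotv (z - a) (z - a) < delta ^+ 2].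

Definition convex_set k (C : set 'rV[R]_k) : Prop :=
  forall a b t, C a -> C b -> 0 <= t -> t <= 1 -> C (t *: a + (1 - t) *: b).

Definition eclosure k (C : set 'rV[R]_k) : set 'rV[R]_k :=
  [set z | forall eps : R, 0 < eps -> exists c, C c /\ eball z eps c].

Definition nearly_convex k (O : set 'rV[R]_k) : Prop :=
  exists C, convex_set C /\ C `<=` O /\ O `<=` eclosure C.

Definition aff k (O : set 'rV[R]_k) : set 'rV[R]_k :=
  [set x | exists (m : nat) (z : 'I_m -> 'rV[R]_k) (l : 'I_m -> R),
      (forall i, O (z i)) /\ \sum_(i < m) l i = 1 /\ x = \sum_(i < m) l i *: z i].

Definition ri k (O : set 'rV[R]_k) : set 'rV[R]_k :=
  [set a | O a /\ exists delta : R, 0 < delta /\ (eball a delta `&` aff O) `<=` O].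

(* epigraph of f : R^k -> [-oo,+oo], as a subset of R^(k+1) = R^k x R *)
Definition epi k (f : 'rV[R]_k -> \bar R) : set 'rV[R]_(k + 1) :=
  [set z | (f (lsubmx z) <= (rsubmx z 0 0)%:E)%E].

Definition nearly_convex_fun k (f : 'rV[R]_k -> \bar R) : Prop :=
  nearly_convex (epi f).

Definition dom k (f : 'rV[R]_k -> \bar R) : set 'rV[R]_k :=
  [set z | (f z < +oo)%E].

Definition proper_fun k (f : 'rV[R]_k -> \bar R) : Prop :=
  (exists z, dom f z) /\ (forall z, (-oo < f z)%E).

(* graph of F : R^n =>> R^p, as a subset of R^(n+p) = R^n x R^p *)
Definition gph n p (F : 'rV[R]_n -> set 'rV[R]_p) : set 'rV[R]_(n + p) :=
  [set z | F (lsubmx z) (rsubmx z)].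

Definition nearly_convex_map n p (F : 'rV[R]_n -> set 'rV[R]_p) : Prop :=
  nearly_convex (gph F).

Definition normal_cone k (zb : 'rV[R]_k) (O : set 'rV[R]_k) : set 'rV[R]_k :=
  [set v | forall z, O z -> dotv v (z - zb) <= 0].

Definition coderiv n p (F : 'rV[R]_n -> set 'rV[R]_p) (xb : 'rV[R]_n)
    (yb : 'rV[R]_p) (v : 'rV[R]_p) : set 'rV[R]_n :=
  [set u | normal_cone (row_mx xb yb) (gph F) (row_mx u (- v))].

(* subdifferential of phi at zb (meaningful when phi zb is finite) *)
Definition subdiff k (phi : 'rV[R]_k -> \bar R) (zb : 'rV[R]_k) : set 'rV[R]_k :=
  [set w | forall z, ((dotv w (z - zb))%:E <= phi z - phi zb)%E].

Definition mu n p (f : 'rV[R]_(n + p) -> \bar R) (F : 'rV[R]_n -> set 'rV[R]_p)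
    (x : 'rV[R]_n) : \bar R :=
  ereal_inf [set f (row_mx x y) | y in F x].

Definition solmap n p (f : 'rV[R]_(n + p) -> \bar R) (F : 'rV[R]_n -> set 'rV[R]_p)
    (x : 'rV[R]_n) : set 'rV[R]_p :=
  [set y | F x y /\ f (row_mx x y) = mu f F x].

End Defs.

(* For "=>", a subgradient w of
   mu gives the affine minorant  l(z) = m + <w, x(z) - xb>  of f on gph F
   (m = mu(xb)).  The set of pairs (a_x - y, a_t - l(a_x)), with a in a convex
   core CE of epi f and y in a convex core CO of gph F, is convex, contains
   only nonnegative heights above the origin, and, thanks to a common
   relative interior point, every direction in it can be reversed.  A
   finite-dimensional Hahn-Banach argument (extending a linear minorant one
   coordinate at a time) then yields ze with
     <ze, a_x - y> <= a_t - l(a_x)   for all a in epi f, y in gph F,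
   after passing to closures.  Specialising a to (z, f z) and y to (xb,yb)
   gives the subgradient ze + (w,0) of f, and a to ((xb,yb), m) gives the
   normal vector -ze to gph F.

   Here a convex core of a nearly convex
   set O is a convex C with C <= O <= cl C, as in the definition. *)
From HB Require Import structures.
From mathcomp Require Import all_boot all_order all_algebra.
From mathcomp Require Import all_classical all_reals all_analysis.
From mathcomp Require Import ring lra.
From Pilot Require Import Defs.
Import Order.TTheory GRing.Theory Num.Theory.
Set Implicit Arguments. Unset Strict Implicit. Unset Printing Implicit Defensive.
Local Open Scope classical_set_scope.
Local Open Scope ring_scope.

Section InnerProduct.
Variable R : realType.

Lemma dotvC k (u v : 'rV[R]_k) : dotv u v = dotv v u.
Proof. by rewrite /dotv; apply: eq_bigr => i _; rewrite mulrC. Qed.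

Lemma dotvDr k (u v w : 'rV[R]_k) : dotv u (v + w) = dotv u v + dotv u w.
Proof. by rewrite /dotv -big_split; apply: eq_bigr => i _; rewrite mxE mulrDr. Qed.

Lemma dotvDl k (u v w : 'rV[R]_k) : dotv (v + w) u = dotv v u + dotv w u.
Proof. by rewrite dotvC dotvDr !(dotvC u). Qed.

Lemma dotvZr k (u v : 'rV[R]_k) a : dotv u (a *: v) = a * dotv u v.
Proof. by rewrite /dotv mulr_sumr; apply: eq_bigr => i _; rewrite mxE; ring. Qed.

Lemma dotvZl k (u v : 'rV[R]_k) a : dotv (a *: v) u = a * dotv v u.
Proof. by rewrite dotvC dotvZr dotvC. Qed.

Lemma dotvNr k (u v : 'rV[R]_k) : dotv u (- v) = - dotv u v.
Proof. by rewrite -scaleN1r dotvZr mulN1r. Qed.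

Lemma dotvNl k (u v : 'rV[R]_k) : dotv (- v) u = - dotv v u.
Proof. by rewrite dotvC dotvNr dotvC. Qed.

Lemma dotvBr k (u v w : 'rV[R]_k) : dotv u (v - w) = dotv u v - dotv u w.
Proof. by rewrite dotvDr dotvNr. Qed.

Lemma dotv0r k (u : 'rV[R]_k) : dotv u 0 = 0.
Proof. by rewrite /dotv big1 // => i _; rewrite mxE mulr0. Qed.

Lemma dotv0l k (u : 'rV[R]_k) : dotv 0 u = 0.
Proof. by rewrite dotvC dotv0r. Qed.

Lemma dotv_row_mx m n (a c : 'rV[R]_m) (b d : 'rV[R]_n) :
  dotv (row_mx a b) (row_mx c d) = dotv a c + dotv b d.
Proof.
rewrite /dotv big_split_ord /=; congr (_ + _); apply: eq_bigr => i _.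
  by rewrite !row_mxEl.
by rewrite !row_mxEr.
Qed.

Lemma dotv_split n p (a c : 'rV[R]_(n + p)) :
  dotv a c = dotv (lsubmx a) (lsubmx c) + dotv (rsubmx a) (rsubmx c).
Proof. by rewrite -{1}(hsubmxK a) -{1}(hsubmxK c) dotv_row_mx. Qed.

Lemma dotv_ge0 k (u : 'rV[R]_k) : 0 <= dotv u u.
Proof. by apply: sumr_ge0 => i _; rewrite -expr2 sqr_ge0. Qed.

Lemma dotv_delta k (o : 'I_k) (d : 'rV[R]_k) :
  dotv (\row_(i < k) (i == o)%:R) d = d 0 o.
Proof.
rewrite /dotv (bigD1 o) //= big1 ?addr0; first by rewrite mxE eqxx mul1r.
by move=> i /negbTE io; rewrite mxE io mul0r.
Qed.

Lemma coord_le_dotv k (u : 'rV[R]_k) i : u 0 i ^+ 2 <= dotv u u.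
Proof.
rewrite /dotv (bigD1 i) //= -expr2 lerDl.
by apply: sumr_ge0 => j _; rewrite -expr2 sqr_ge0.
Qed.

Lemma dotv_bound k (u e : 'rV[R]_k) eps :
  (forall i, `|e 0 i| <= eps) -> `|dotv u e| <= eps * \sum_i `|u 0 i|.
Proof.
move=> He; rewrite /dotv mulr_sumr.
apply: (le_trans (ler_norm_sum _ _ _)); apply: ler_sum => i _.
by rewrite normrM mulrC ler_wpM2r.
Qed.

Lemma eball_coord k (a c : 'rV[R]_k) eps : 0 < eps -> eball a eps c ->
  forall i, `|c 0 i - a 0 i| < eps.
Proof.
move=> e0; rewrite /eball /= => H i.
have := le_lt_trans (coord_le_dotv (c - a) i) H.
rewrite !mxE -(real_normK (num_real (c 0 i - a 0 i))) => H2.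
have := normr_ge0 (c 0 i - a 0 i); move: H2.
set y := `|_|; nra.
Qed.

End InnerProduct.

(* Finite-dimensional Hahn-Banach theorem in the form needed here.  It is the Hahn-Banach extension for the
   sublinear functional d |-> inf {t | (d,t) in cone G}, done one coordinate
   at a time: a form valid on vectors supported by the first j coordinates
   is extended to j+1 by choosing its new coefficient as a supremum. *)
Section ConvexRelationSeparation.
Variables (R : realType) (k : nat) (G : 'rV[R]_k -> R -> Prop).
Hypothesis G_convex : forall d1 t1 d2 t2 l, G d1 t1 -> G d2 t2 -> 0 <= l -> l <= 1 ->
  G (l *: d1 + (1 - l) *: d2) (l * t1 + (1 - l) * t2).
Hypothesis G_zero : forall t, G 0 t -> 0 <= t.
Hypothesis G_opp : forall d t, G d t -> exists e t', 0 < e /\ G (- (e *: d)) t'.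

Let cone d t := exists s d0 t0, 0 < s /\ G d0 t0 /\ d = s *: d0 /\ t = s * t0.

Let cone_add d1 t1 d2 t2 : cone d1 t1 -> cone d2 t2 -> cone (d1 + d2) (t1 + t2).
Proof.
move=> [s1 [a1 [b1 [s10 [G1 [-> ->]]]]]] [s2 [a2 [b2 [s20 [G2 [-> ->]]]]]].
have s0 : 0 < s1 + s2 by rewrite addr_gt0.
have sn0 : s1 + s2 != 0 by rewrite gt_eqF.
set l := s1 / (s1 + s2).
exists (s1 + s2), (l *: a1 + (1 - l) *: a2), (l * b1 + (1 - l) * b2).
split => //; split.
  apply: G_convex => //; first by rewrite divr_ge0 // ltW.
  by rewrite ler_pdivrMr // mul1r lerDl ltW.
have -> : 1 - l = s2 / (s1 + s2) by rewrite /l; field.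
split; first by rewrite scalerDr !scalerA !mulrA !(mulrC (s1 + s2)) !mulfK.
by rewrite mulrDr !mulrA !(mulrC (s1 + s2)) !mulfK.
Qed.

Let cone_scale c d t : 0 < c -> cone d t -> cone (c *: d) (c * t).
Proof.
move=> c0 [s [a [b [s0 [Gab [-> ->]]]]]].
by exists (c * s), a, b; rewrite mulr_gt0 // scalerA mulrA.
Qed.

Let cone_zero t : cone 0 t -> 0 <= t.
Proof.
move=> [s [a [b [s0 [Gab [E ->]]]]]].
have a0 : a = 0.
  by move/eqP: E; rewrite eq_sym scaler_eq0 (gt_eqF s0) /= => /eqP.
by rewrite a0 in Gab; apply: mulr_ge0; [exact: ltW | exact: G_zero].
Qed.

Let cone_opp d t : cone d t -> exists t', cone (- d) t'.
Proof.
move=> [s [a [b [s0 [Gab [-> _]]]]]].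
have [e [t' [e0 Ge]]] := G_opp Gab.
exists (s / e * t'), (s / e), (- (e *: a)), t'; split; first by rewrite divr_gt0.
split => //; split => //.
by rewrite scalerN scalerA mulfVK ?gt_eqF // scalerN.
Qed.

Let supp_lt j (d : 'rV[R]_k) := forall i : 'I_k, (j <= i)%N -> d 0 i = 0.

Let separates j (z : 'rV[R]_k) :=
  supp_lt j z /\ forall d t, cone d t -> supp_lt j d -> dotv z d <= t.

Let supp_lt_pred j (hj : (j < k)%N) d :
  supp_lt j.+1 d -> d 0 (Ordinal hj) = 0 -> supp_lt j d.
Proof.
move=> Zd Zo i; rewrite leq_eqVlt => /orP [/eqP ji|]; last exact: Zd.
by have -> : i = Ordinal hj by apply: val_inj => /=; rewrite ji.
Qed.

(* The lower bounds imposed on the new coefficient by directions with a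
   negative j-th coordinate lie below the upper bounds imposed by directions
   with a positive one: combine the two directions to cancel coordinate j. *)
Let bounds_compatible j (hj : (j < k)%N) z d t d' t' :
  separates j z -> cone d t -> cone d' t' -> supp_lt j.+1 d -> supp_lt j.+1 d' ->
  d 0 (Ordinal hj) < 0 -> 0 < d' 0 (Ordinal hj) ->
  (dotv z d - t) / (- d 0 (Ordinal hj)) <= (t' - dotv z d') / d' 0 (Ordinal hj).
Proof.
set o := Ordinal hj => -[_ Hz] Kd Kd' Zd Zd' dn dp.
set a := - d 0 o.
have a0 : 0 < a by rewrite oppr_gt0.
have Kc := cone_add (cone_scale dp Kd) (cone_scale a0 Kd').
have Zc1 : supp_lt j.+1 (d' 0 o *: d + a *: d').
  by move=> i ji; rewrite !mxE (Zd i) // (Zd' i) // !mulr0 addr0.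
have Zc : supp_lt j (d' 0 o *: d + a *: d').
  by apply: (supp_lt_pred Zc1); rewrite !mxE /a; ring.
have := Hz _ _ Kc Zc; rewrite dotvDr !dotvZr => H.
rewrite ler_pdivrMr // mulrAC ler_pdivlMr //; nra.
Qed.

(* the induction step: add coordinate j, with coefficient the supremum of
   the lower bounds *)
Let separates_succ j (hj : (j < k)%N) z : separates j z -> exists z', separates j.+1 z'.
Proof.
move=> sepz; have [z0 Hz] := sepz.
set o := Ordinal hj.
pose A := [set x : R | exists d t, cone d t /\ supp_lt j.+1 d /\ d 0 o < 0 /\
                         x = (dotv z d - t) / (- d 0 o)].
have ubA d' t' : cone d' t' -> supp_lt j.+1 d' -> 0 < d' 0 o ->
    ubound A ((t' - dotv z d') / d' 0 o).
  by move=> Kd' Zd' dp _ [d [t [Kd [Zd [dn ->]]]]]; exact: bounds_compatible sepz _ _ _ _ _ _.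
exists (z + sup A *: \row_(i < k) (i == o)%:R); split.
  move=> i ji; rewrite !mxE z0 ?(ltnW ji) //.
  have /negbTE -> : i != o by apply/eqP => io; move: ji; rewrite io /= ltnn.
  by rewrite mulr0 addr0.
move=> d t Kd Zd; rewrite dotvDl dotvZl dotv_delta.
have [t'' Kn] := cone_opp Kd.
have Zn : supp_lt j.+1 (- d) by move=> i ji; rewrite mxE Zd // oppr0.
case: (ltgtP (d 0 o) 0) => [dn|dp|d0].
- have Aa : A ((dotv z d - t) / (- d 0 o)) by exists d, t.
  have hs : has_sup A.
    split; first by exists ((dotv z d - t) / (- d 0 o)).
    by exists ((t'' - dotv z (- d)) / (- d) 0 o); apply: ubA; rewrite // mxE oppr_gt0.
  have := sup_upper_bound hs Aa.
  rewrite ler_pdivrMr ?oppr_gt0 //; nra.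
- have An : A ((dotv z (- d) - t'') / (- (- d) 0 o)).
    by exists (- d), t''; rewrite mxE oppr_lt0.
  have := ge_sup (ex_intro _ _ An) (ubA _ _ Kd Zd dp).
  rewrite ler_pdivlMr //; nra.
- by rewrite d0 mulr0 addr0; apply: Hz => //; apply: supp_lt_pred.
Qed.

Lemma convex_relation_separation : exists z : 'rV[R]_k, forall d t, G d t -> dotv z d <= t.
Proof.
have sep j : (j <= k)%N -> exists z, separates j z.
  elim: j => [_|j IH hj]; last first.
    by have [z sepz] := IH (ltnW hj); exact: separates_succ sepz.
  exists 0; split=> [i _|d t Kd Zd]; first by rewrite mxE.
  have d0 : d = 0 by apply/rowP => i; rewrite Zd // mxE.
  by rewrite d0 dotv0l; apply: cone_zero; rewrite -d0.
have [z [_ Hz]] := sep k (leqnn k).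
exists z => d t Gdt; apply: Hz; last by move=> i; rewrite leqNgt ltn_ord.
by exists 1, d, t; rewrite ltr01 scale1r mul1r.
Qed.

End ConvexRelationSeparation.

(* Let C be convex with
   C <= O <= cl C.  An affine basis c0 + rows of V of C is chosen; the
   closure of C stays in the affine span c0 + <V>, a barycentre of the basis
   has a relative sup-norm ball inside C, and from this any point p whose
   relative neighbourhood lies in cl C is shown to lie in C itself.  Points
   of ri O have this property, with room to spare in every direction. *)
Section RelativeInterior.
Variables (R : realType) (N : nat).
Implicit Types C O : set 'rV[R]_N.

(* a maximal free family of directions c - c0 (c in C) spans all of them *)
Lemma basis_ex C c0 : C c0 -> exists r (V : 'M[R]_(r, N)),
  (forall i, C (c0 + row i V)) /\ row_free V /\ (forall c, C c -> (c - c0 <= V)%MS).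
Proof.
move=> Cc0.
pose P r := `[< exists V : 'M[R]_(r, N), (forall i, C (c0 + row i V)) /\ row_free V >].
have P0 : exists r, P r.
  exists 0%N; apply/asboolP; exists 0; split; first by case.
  by rewrite /row_free mxrank0.
have Pub r : P r -> (r <= N)%N.
  by move=> /asboolP [V [_ /eqP <-]]; exact: rank_leq_col.
case: (ex_maxnP P0 Pub) => r /asboolP [V [HV fV]] rmax.
exists r, V; split => //; split => // c Cc.
apply/negPn/negP => nsub.
have : P (1 + r)%N.
  apply/asboolP; exists (col_mx (c - c0) V); split.
    move=> i; rewrite -[i]splitK; case: (fintype.split i) => j /=; last by rewrite rowKd.
    rewrite rowKu (_ : row j (c - c0) = c - c0); first by rewrite addrC subrK.
    by apply/rowP => k; rewrite mxE ord1.
  rewrite /row_free -addsmxE eqn_leq; apply/andP; split.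
    by rewrite addsmxE rank_leq_row.
  move/eqP: fV => fV.
  rewrite add1n -{1}fV; apply: rank_ltmx; rewrite ltmxE addsmxSr /=.
  by apply/negP => H; move: nsub; rewrite (submx_trans (addsmxSl _ _) H).
by move/rmax; rewrite add1n ltnn.
Qed.

Lemma subv_sub m1 m2 (A B : 'M[R]_(m1, N)) (D : 'M[R]_(m2, N)) :
  (A <= D)%MS -> (B <= D)%MS -> (A - B <= D)%MS.
Proof. by move=> ha hb; apply: addmx_sub => //; rewrite -scaleN1r scalemx_sub. Qed.

Lemma mulmx_bound m n (e : 'rV[R]_m) (M : 'M[R]_(m, n)) eps j :
  (forall i, `|e 0 i| <= eps) -> `|(e *m M) 0 j| <= eps * \sum_i `|M i j|.
Proof.
move=> He; rewrite mxE mulr_sumr.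
apply: (le_trans (ler_norm_sum _ _ _)); apply: ler_sum => i _.
by rewrite normrM; apply: ler_wpM2r.
Qed.

Lemma small0 (a : R) : (forall eps, 0 < eps -> `|a| <= eps) -> a = 0.
Proof.
move=> H; apply/eqP; apply/negPn/negP => a0.
have na0 : 0 < `|a| by rewrite normr_gt0.
have := H (`|a| / 2); rewrite divr_gt0 // => /(_ isT); lra.
Qed.

Lemma submx_proj r (V : 'M[R]_(r, N)) B (u : 'rV[R]_N) :
  V *m B = 1%:M -> (u <= V)%MS -> u *m B *m V = u.
Proof. by move=> VB /submxP [D ->]; rewrite -(mulmxA D V B) VB mulmx1. Qed.

Lemma simplex C c0 n (v : 'I_n -> 'rV[R]_N) (g : 'I_n -> R) :
  Defs.convex_set C -> C c0 -> (forall i, C (c0 + v i)) -> (forall i, 0 <= g i) ->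
  \sum_i g i <= 1 -> C (c0 + \sum_i g i *: v i).
Proof.
move=> cC Cc0; elim: n v g => [|n IH] v g Hv Hg Hs; first by rewrite big_ord0 addr0.
rewrite big_ord_recr /=; rewrite big_ord_recr /= in Hs.
set W := widen_ord (leqnSn n); set s := g ord_max; rewrite -/s in Hs.
have Hr : 0 <= \sum_(i < n) g (W i) by apply: sumr_ge0.
case: (ltrP s 1) => s1; last first.
  have Hz : \sum_(i < n) g (W i) = 0 by lra.
  rewrite (_ : s = 1); last by lra.
  rewrite big1 ?add0r ?scale1r // => i _.
  move/eqP: Hz; rewrite psumr_eq0 => [/allP H|j _]; last exact: Hg.
  by rewrite (eqP (H i (mem_index_enum _))) scale0r.
have s1' : 0 < 1 - s by lra.
have H1 := IH (fun i => v (W i)) (fun i => g (W i) / (1 - s)) (fun i => Hv _)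
  (fun i => divr_ge0 (Hg _) (ltW s1')).
have H2 : \sum_(i < n) g (W i) / (1 - s) <= 1.
  by rewrite -mulr_suml ler_pdivrMr // mul1r; lra.
have s2 : 1 - s <= 1 by have := Hg ord_max; rewrite -/s; lra.
have := cC _ _ (1 - s) (H1 H2) (Hv ord_max) (ltW s1') s2.
have -> // : (1 - s) *: (c0 + \sum_i (g (W i) / (1 - s)) *: v (W i)) +
    (1 - (1 - s)) *: (c0 + v ord_max) = c0 + (\sum_i g (W i) *: v (W i) + s *: v ord_max).
rewrite !scalerDr scaler_sumr.
under eq_bigr => i _ do rewrite scalerA mulrC divfK ?gt_eqF //.
by apply/rowP => j; rewrite !mxE; ring.
Qed.

Lemma aff_span C O c0 r (V : 'M[R]_(r, N)) x :
  C c0 -> (forall i, C (c0 + row i V)) -> C `<=` O -> (x - c0 <= V)%MS -> aff O x.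
Proof.
move=> Cc0 HV CO /submxP [D xD].
have xE : x = c0 + \sum_i D 0 i *: row i V by rewrite -mulmx_sum_row -xD addrC subrK.
exists r.+1, (fun i => if unlift ord0 i is Some j then c0 + row j V else c0),
  (fun i => if unlift ord0 i is Some j then D 0 j else 1 - \sum_j D 0 j).
split; first by move=> i; case: (unlift ord0 i) => [j|]; apply: CO.
rewrite !big_ord_recl /= unlift_none.
split.
  rewrite [X in _ + X](eq_bigr (fun i => D 0 i)) ?subrK // => i _.
  by rewrite liftK.
rewrite [X in _ + X](eq_bigr (fun i => D 0 i *: c0 + D 0 i *: row i V)); last first.
  by move=> i _; rewrite liftK scalerDr.
rewrite big_split /= -scaler_suml xE.
apply/rowP => j; rewrite !mxE; ring.
Qed.

Lemma entD m (A B : 'rV[R]_m) i : (A + B) 0 i = A 0 i + B 0 i.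
Proof. by rewrite mxE. Qed.
Lemma entN m (A : 'rV[R]_m) i : (- A) 0 i = - A 0 i.
Proof. by rewrite mxE. Qed.
Lemma entB m (A B : 'rV[R]_m) i : (A - B) 0 i = A 0 i - B 0 i.
Proof. by rewrite !mxE. Qed.
Lemma entZ m (A : 'rV[R]_m) a i : (a *: A) 0 i = a * A 0 i.
Proof. by rewrite mxE. Qed.

Lemma ecl_sub C c0 r (V : 'M[R]_(r, N)) B x : V *m B = 1%:M ->
  (forall c, C c -> (c - c0 <= V)%MS) -> eclosure C x -> (x - c0 <= V)%MS.
Proof.
move=> VB HC Hx.
set y := x - c0; set M := B *m V.
suff E : y *m M = y by rewrite -E mulmxA submxMl.
apply/rowP => j.
have K0 : 0 <= \sum_i `|M i j| by apply: sumr_ge0.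
apply/eqP; rewrite -subr_eq0; apply/eqP; apply: small0 => eps e0.
set eta := eps / (2 + \sum_i `|M i j|).
have eta0 : 0 < eta by rewrite divr_gt0 //; lra.
have [c [Cc Hb]] := Hx eta eta0.
have Hc := eball_coord eta0 Hb.
set e := c - x.
have H1 : y *m M + e *m M = y + e.
  rewrite -mulmxDl (_ : y + e = c - c0); last by rewrite /y /e addrC addrA subrK.
  by rewrite /M mulmxA submx_proj // HC.
rewrite (_ : y *m M = y + e - e *m M); last by rewrite -H1 addrK.
set t := (e *m M) 0 j.
have Ht : `|t| <= eta * \sum_i `|M i j|.
  by apply: mulmx_bound => i; rewrite /e entB ltW.
have Hej : `|e 0 j| <= eta by rewrite /e entB ltW.
rewrite (_ : (y + e - e *m M) 0 j - y 0 j = e 0 j - t); last first.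
  by rewrite /t /y /e !entB !entD !entN; ring.
apply: (le_trans (ler_normB _ _)).
have : eta * (2 + \sum_i `|M i j|) = eps by rewrite /eta divfK // gt_eqF //; lra.
lra.
Qed.

Lemma perturbed_weights r (q : R) (al : 'I_r -> R) :
  0 <= q -> q * (r.+1%:R * r.+1%:R) <= 1 -> (forall i, `|al i| <= q) ->
  (forall i, 0 <= 1 / r.+1%:R + al i) /\ \sum_i (1 / r.+1%:R + al i) <= 1.
Proof.
set a : R := r.+1%:R => q0 qa Hal.
have a1 : 1 <= a by rewrite /a ler1n.
have ra : r%:R = a - 1 by rewrite /a -natr1 addrK.
clearbody a.
have ia : a * (1 / a) = 1 by rewrite mulrC divfK // gt_eqF //; lra.
have h1 : q * a <= 1 / a by rewrite ler_pdivlMr; [rewrite -mulrA | lra].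
have h2 : q * (a - 1) <= q * a by rewrite ler_wpM2l //; lra.
have q_ia : q <= 1 / a.
  by apply: le_trans h1; rewrite -{1}(mulr1 q); apply: ler_wpM2l.
split=> [i|].
  by have := Hal i; rewrite ler_norml => /andP [? _]; lra.
have Hs : \sum_(i < r) al i <= \sum_(i < r) q.
  by apply: ler_sum => i _; apply: le_trans (Hal i); apply: ler_norm.
rewrite sumr_const card_ord -mulr_natr ra in Hs.
rewrite big_split /= sumr_const card_ord -mulr_natr ra.
have h3 : 1 / a * (a - 1) = 1 - 1 / a by rewrite mulrBr mulrC ia mulr1.
rewrite h3; move: Hs h1 h2; move: (\sum_(i < r) al i) (1 / a) => S ia2; lra.
Qed.

Lemma bary_ball C c0 r (V : 'M[R]_(r, N)) B : Defs.convex_set C -> C c0 ->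
  (forall i, C (c0 + row i V)) -> V *m B = 1%:M ->
  exists b eta, 0 < eta /\ (b - c0 <= V)%MS /\
    forall l, (l <= V)%MS -> (forall j, `|l 0 j| < eta) -> C (b + l).
Proof.
move=> cC Cc0 HV VB.
set a : R := r.+1%:R.
set KB := \sum_i \sum_j `|B i j|.
have KB0 : 0 <= KB by apply: sumr_ge0 => i _; apply: sumr_ge0.
set eta := 1 / (a * a * (1 + KB)).
have a1 : 1 <= a by rewrite /a ler1n.
have eta0 : 0 < eta by rewrite /eta divr_gt0 // !mulr_gt0 //; lra.
have etaKB : eta * KB * (a * a) <= 1.
  have E : eta * (a * a * (1 + KB)) = 1.
    by rewrite /eta div1r mulVf // !mulf_neq0 // gt_eqF //; lra.
  have h : 0 <= eta * (a * a) by apply: mulr_ge0; [exact: ltW | apply: mulr_ge0; lra].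
  lra.
exists (c0 + const_mx (1 / a) *m V), eta; split => //; split.
  by rewrite addrC addKr submxMl.
move=> l lV Hl.
set al := l *m B.
have lE : l = al *m V by rewrite /al submx_proj.
have Hal i : `|al 0 i| <= eta * KB.
  apply: (le_trans (@mulmx_bound _ _ l B eta i (fun j => ltW (Hl j)))).
  rewrite ler_wpM2l ?(ltW eta0) // /KB.
  by apply: ler_sum => j _; rewrite (bigD1 i) //= lerDl sumr_ge0.
have -> : c0 + const_mx (1 / a) *m V + l = c0 + \sum_i (1 / a + al 0 i) *: row i V.
  rewrite lE -addrA -mulmxDl mulmx_sum_row; congr (_ + _).
  by apply: eq_bigr => i _; rewrite !mxE.
have [w0 w1] := perturbed_weights (mulr_ge0 (ltW eta0) KB0) etaKB Hal.
exact: simplex.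
Qed.

Lemma coord_le_sum (u : 'rV[R]_N) j : `|u 0 j| <= \sum_i `|u 0 i|.
Proof. by rewrite (bigD1 j) //= lerDl sumr_ge0. Qed.

Lemma small_scale (u : 'rV[R]_N) eta : 0 < eta ->
  exists ep, 0 < ep /\ ep <= 1 /\ forall j, ep * `|u 0 j| < eta.
Proof.
move=> eta0; set S := \sum_i `|u 0 i|.
have S0 : 0 <= S by apply: sumr_ge0.
have E : eta / (1 + S) * (1 + S) = eta by rewrite divfK // gt_eqF //; lra.
have e0 : 0 < eta / (1 + S) by rewrite divr_gt0 //; lra.
move: E e0; move: (eta / (1 + S)) => e' E e0.
set m := Num.min 1 e'.
have m0 : 0 < m by rewrite lt_min ltr01.
have m1 : m <= e' by rewrite ge_min lexx orbT.
exists m; split => //; split; first by rewrite ge_min lexx.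
move=> j; have hj := coord_le_sum u j.
have h1 : m * `|u 0 j| <= m * S by apply: ler_wpM2l => //; apply: ltW.
have h2 : m * (1 + S) <= e' * (1 + S) by apply: ler_wpM2r => //; lra.
lra.
Qed.

(* If a relative neighbourhood of p in c0 + <V> lies in cl C, then p is in C:
   push p slightly away from the barycentre b, approximate by c in C, and
   write p as a convex combination of c and a point of the ball around b. *)
Lemma core_in C c0 r (V : 'M[R]_(r, N)) B p eta : Defs.convex_set C -> C c0 ->
  (forall i, C (c0 + row i V)) -> V *m B = 1%:M ->
  (forall c, C c -> (c - c0 <= V)%MS) -> (p - c0 <= V)%MS -> 0 < eta ->
  (forall x, (x - c0 <= V)%MS -> (forall j, `|x 0 j - p 0 j| < eta) -> eclosure C x) ->
  C p.
Proof.
move=> cC Cc0 HV VB HC pV eta0 Hx.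
have [b [etb [etb0 [bV Hb]]]] := bary_ball cC Cc0 HV VB.
have [ep [ep0 [_ Hu]]] := small_scale (p - b) eta0.
set q := p + ep *: (p - b).
have qV : (q - c0 <= V)%MS.
  rewrite (_ : q - c0 = (p - c0) + ep *: ((p - c0) - (b - c0))); last first.
    by apply/rowP => j; rewrite !mxE; ring.
  by apply: addmx_sub => //; apply: scalemx_sub; apply: subv_sub.
have Hq : eclosure C q.
  by apply: Hx => // j; rewrite /q entD addrC addKr entZ normrM gtr0_norm.
have th0 : 0 < ep * etb by rewrite mulr_gt0.
have [c [Cc Hc]] := Hq _ th0.
have Hc' := eball_coord th0 Hc.
set l := ep^-1 *: (q - c).
have lV : (l <= V)%MS.
  apply: scalemx_sub; rewrite (_ : q - c = (q - c0) - (c - c0)); last first.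
    by apply/rowP => j; rewrite !mxE; ring.
  by apply: subv_sub => //; apply: HC.
have Hl j : `|l 0 j| < etb.
  rewrite /l entZ normrM gtr0_norm ?invr_gt0 // entB distrC.
  by rewrite ltr_pdivrMl // mulrC.
have t0 : 0 <= 1 / (1 + ep) by rewrite divr_ge0 //; lra.
have t1 : 1 / (1 + ep) <= 1 by rewrite ler_pdivrMr; lra.
have := cC c (b + l) (1 / (1 + ep)) Cc (Hb l lV Hl) t0 t1.
have -> // : 1 / (1 + ep) *: c + (1 - 1 / (1 + ep)) *: (b + l) = p.
apply/rowP => j; rewrite /l /q !mxE.
field; apply/andP; split; rewrite gt_eqF //; lra.
Qed.

Lemma ri_span_closure C O p c0 r (V : 'M[R]_(r, N)) :
  C `<=` O -> O `<=` eclosure C -> ri O p -> C c0 -> (forall i, C (c0 + row i V)) ->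
  exists2 eta, 0 < eta & forall x, (x - c0 <= V)%MS ->
    (forall j, `|x 0 j - p 0 j| < eta) -> eclosure C x.
Proof.
move=> CO OC [_ [d [d0 Hd]]] Cc0 HV.
set nn : R := N%:R.
have nn0 : 0 <= nn by rewrite /nn ler0n.
set eta := d / (nn + 1).
have eta0 : 0 < eta by rewrite divr_gt0 //; lra.
have E : eta * (nn + 1) = d by rewrite divfK // gt_eqF //; lra.
exists eta => // x xV Hx; apply: OC; apply: Hd.
split; last exact: aff_span Cc0 HV CO xV.
rewrite /eball /= /dotv.
have : \sum_i (x - p) 0 i * (x - p) 0 i <= \sum_(i < N) eta * eta.
  apply: ler_sum => i _; rewrite entB -expr2 -real_normK ?num_real //.
  have := Hx i; have := normr_ge0 (x 0 i - p 0 i).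
  move: `|_| => v v0 v1; nra.
rewrite sumr_const card_ord -mulr_natr -/nn => H.
apply: (le_lt_trans H); rewrite -E.
clearbody eta nn; nra.
Qed.

Lemma ri_in_convex_core C O p : Defs.convex_set C -> C `<=` O -> O `<=` eclosure C ->
  ri O p -> C p /\ forall y, C y -> exists2 ep, 0 < ep & C (p + ep *: (p - y)).
Proof.
move=> cC CO OC riOp; have [Op _] := riOp.
have [c0 [Cc0 _]] := OC p Op 1 ltr01.
have [r [V [HV [fV HC]]]] := basis_ex Cc0.
case/row_freeP: fV => B VB.
have pV : (p - c0 <= V)%MS := ecl_sub VB HC (OC _ Op).
have [eta eta0 near_p] := ri_span_closure CO OC riOp Cc0 HV.
have Cp : C p := core_in cC Cc0 HV VB HC pV eta0 near_p.
split => // y Cy.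
have eta20 : 0 < eta / 2 by rewrite divr_gt0.
have [ep [ep0 [_ Hu]]] := small_scale (p - y) eta20.
exists ep => //.
have p'V : (p + ep *: (p - y) - c0 <= V)%MS.
  rewrite (_ : p + ep *: (p - y) - c0 = (p - c0) + ep *: ((p - c0) - (y - c0))); last first.
    by apply/rowP => j; rewrite !mxE; ring.
  by apply: addmx_sub => //; apply: scalemx_sub; apply: subv_sub => //; apply: HC.
apply: (core_in cC Cc0 HV VB HC p'V eta20) => x xV Hx.
apply: near_p => // j.
have := Hx j; have := Hu j.
rewrite (entD p (ep *: (p - y))) entZ.
have := ler_normD (x 0 j - (p 0 j + ep * (p - y) 0 j)) (ep * (p - y) 0 j).
rewrite normrM (gtr0_norm ep0).
rewrite (_ : x 0 j - (p 0 j + ep * (p - y) 0 j) + ep * (p - y) 0 j = x 0 j - p 0 j); last by ring.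
move: (`|x 0 j - p 0 j|) (`|_ - _|) => A1 A2.
have : eta / 2 + eta / 2 = eta by field.
move: (eta / 2) => e2; lra.
Qed.

Lemma convex_ray_shrink C p u e1 e : Defs.convex_set C -> C p ->
  C (p + e1 *: u) -> 0 < e -> e <= e1 -> C (p + e *: u).
Proof.
move=> cC Cp Cq e0 ee.
have e10 : 0 < e1 by apply: lt_le_trans ee.
have t0 : 0 <= e / e1 by rewrite divr_ge0 // ltW.
have t1 : e / e1 <= 1 by rewrite ler_pdivrMr // mul1r.
have := cC _ _ _ Cq Cp t0 t1.
have -> // : e / e1 *: (p + e1 *: u) + (1 - e / e1) *: p = p + e *: u.
apply/rowP => j; rewrite !mxE; field; rewrite gt_eqF //.
Qed.

Lemma ecl_ext C (g : 'rV[R]_N -> R) (K : R) : 0 <= K ->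
  (forall (x x' : 'rV[R]_N) (eps : R), 0 < eps -> (forall i, `|x 0 i - x' 0 i| < eps) ->
     `|g x - g x'| <= K * eps) ->
  (forall c, C c -> 0 <= g c) -> forall x, eclosure C x -> 0 <= g x.
Proof.
move=> K0 Hg HC x Hx; case: (lerP 0 (g x)) => // gx; exfalso.
set eps := - g x / (2 * (K + 1)).
have eps0 : 0 < eps by rewrite divr_gt0 ?oppr_gt0 //; lra.
have E : eps * (2 * (K + 1)) = - g x by rewrite divfK // gt_eqF //; lra.
have [c [Cc Hc]] := Hx eps eps0.
have := Hg c x eps eps0 (eball_coord eps0 Hc).
have := HC c Cc.
have : K * eps <= (K + 1) * eps by apply: ler_wpM2r; [apply: ltW | lra].
move: (g c) (K * eps) => gc Ke h1 h2 h3.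
have := ler_norml (gc - g x) Ke; rewrite h3 => /esym/andP [_ h4].
clearbody eps; lra.
Qed.

End RelativeInterior.

Lemma lsubmxB (R : realType) n p (a b : 'rV[R]_(n + p)) :
  lsubmx (a - b) = lsubmx a - lsubmx b.
Proof. by apply/rowP => i; rewrite !mxE. Qed.

Lemma rsubmxB (R : realType) n p (a b : 'rV[R]_(n + p)) :
  rsubmx (a - b) = rsubmx a - rsubmx b.
Proof. by apply/rowP => i; rewrite !mxE. Qed.

Lemma epi_row_mx (R : realType) k (g : 'rV[R]_k -> \bar R) z (r : R) :
  (g z <= r%:E)%E -> epi g (row_mx z (const_mx r)).
Proof. by rewrite /epi /= row_mxKl row_mxKr mxE. Qed.

Lemma gph_row_mx (R : realType) n p (F : 'rV[R]_n -> set 'rV[R]_p) x y :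
  F x y -> gph F (row_mx x y).
Proof. by rewrite /gph /= row_mxKl row_mxKr. Qed.

Section EpigraphSeparation.
Variables (R : realType) (k : nat) (f : 'rV[R]_k -> \bar R) (O : set 'rV[R]_k).
Variables (w0 : 'rV[R]_k) (c : R).
Hypothesis f_gtNy : forall z, (-oo < f z)%E.
Hypothesis f_minor : forall z, O z -> ((c + dotv w0 z)%:E <= f z)%E.
Variables (CE : set 'rV[R]_(k + 1)) (CO : set 'rV[R]_k) (z0 : 'rV[R]_k).
Hypotheses (CE_convex : Defs.convex_set CE) (CE_epi : CE `<=` epi f)
  (epi_CE : epi f `<=` eclosure CE).
Hypotheses (CO_convex : Defs.convex_set CO) (CO_O : CO `<=` O)
  (O_CO : O `<=` eclosure CO).
Hypotheses (z0_dom : ri (dom f) z0) (z0_O : ri O z0).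

Let gap (a : 'rV[R]_(k + 1)) := rsubmx a 0 0 - c - dotv w0 (lsubmx a).

Let gap_conv a1 a2 l :
  gap (l *: a1 + (1 - l) *: a2) = l * gap a1 + (1 - l) * gap a2.
Proof.
rewrite /gap (_ : lsubmx _ = l *: lsubmx a1 + (1 - l) *: lsubmx a2); last first.
  by apply/rowP => i; rewrite !mxE.
by rewrite dotvDr !dotvZr !mxE; ring.
Qed.

Let G d s := exists a y, CE a /\ CO y /\ d = lsubmx a - y /\ s = gap a.

Let G_convex d1 t1 d2 t2 l : G d1 t1 -> G d2 t2 -> 0 <= l -> l <= 1 ->
  G (l *: d1 + (1 - l) *: d2) (l * t1 + (1 - l) * t2).
Proof.
move=> [a1 [y1 [Ca1 [Oy1 [-> ->]]]]] [a2 [y2 [Ca2 [Oy2 [-> ->]]]]] l0 l1.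
exists (l *: a1 + (1 - l) *: a2), (l *: y1 + (1 - l) *: y2).
split; first exact: CE_convex.
split; first exact: CO_convex.
split; last by rewrite gap_conv.
by apply/rowP => i; rewrite !mxE; ring.
Qed.

(* above the direction 0 the heights are nonnegative: f lies above the
   minorant on O *)
Let G_zero t : G 0 t -> 0 <= t.
Proof.
move=> [a [y [Ca [Oy [d0 ->]]]]].
have ay : lsubmx a = y by apply/eqP; rewrite -subr_eq0 -d0.
have Ea := CE_epi Ca; rewrite /epi /= ay in Ea.
by have := le_trans (f_minor (CO_O Oy)) Ea; rewrite lee_fin /gap ay; lra.
Qed.

Let D0 := [set lsubmx a | a in CE].

Let D0_convex : Defs.convex_set D0.
Proof.
move=> _ _ t [a1 C1 <-] [a2 C2 <-] t0 t1.
exists (t *: a1 + (1 - t) *: a2); first exact: CE_convex.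
by apply/rowP => i; rewrite !mxE.
Qed.

Let D0_dom : D0 `<=` dom f.
Proof. by move=> _ [a Ca <-]; apply: le_lt_trans (CE_epi Ca) (ltry _). Qed.

Let dom_D0 : dom f `<=` eclosure D0.
Proof.
move=> z; rewrite /dom /=; case Ez: (f z) => [r| |] // _; last first.
  by have := f_gtNy z; rewrite Ez.
have Ea : eclosure CE (row_mx z (const_mx r)) by apply/epi_CE/epi_row_mx; rewrite Ez.
move=> eps e0; have [a [Ca Ha]] := Ea eps e0; exists (lsubmx a); split; first by exists a.
apply: le_lt_trans Ha; rewrite [leRHS]dotv_split lsubmxB rsubmxB row_mxKl.
by rewrite lerDl dotv_ge0.
Qed.

(* every direction of G can be reversed: from the common relative interior
   point z0, step away from a_x in D0 and from y in CO by the same amount *)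
Let G_opp d t : G d t -> exists e t', 0 < e /\ G (- (e *: d)) t'.
Proof.
move=> [a [y [Ca [Oy [-> _]]]]].
have [D0z0 HD0] := ri_in_convex_core D0_convex D0_dom dom_D0 z0_dom.
have [COz0 HCO] := ri_in_convex_core CO_convex CO_O O_CO z0_O.
have [e1 e10 C1] := HD0 (lsubmx a) (ex_intro2 _ _ a Ca erefl).
have [e2 e20 C2] := HCO y Oy.
pose e := Num.min e1 e2.
have e0 : 0 < e by rewrite lt_min e10 e20.
have ee1 : e <= e1 by rewrite ge_min lexx.
have ee2 : e <= e2 by rewrite ge_min lexx orbT.
have [a' Ca' Ea'] := convex_ray_shrink D0_convex D0z0 C1 e0 ee1.
have C2' := convex_ray_shrink CO_convex COz0 C2 e0 ee2.
exists e, (gap a'); split => //.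
exists a', (z0 + e *: (z0 - y)); do 3 split => //.
by rewrite Ea'; apply/rowP => i; rewrite !mxE; ring.
Qed.

Let closure_CE ze :
  (forall a y, CE a -> CO y -> dotv ze (lsubmx a - y) <= gap a) ->
  forall a y, eclosure CE a -> CO y -> dotv ze (lsubmx a - y) <= gap a.
Proof.
move=> Hze a y Ha Oy.
suff : 0 <= gap a - dotv ze (lsubmx a - y) by lra.
have K0 : 0 <= 1 + \sum_i `|w0 0 i| + \sum_i `|ze 0 i| by rewrite !addr_ge0 ?sumr_ge0.
apply: (ecl_ext (g := fun a => gap a - dotv ze (lsubmx a - y)) K0 _ _ Ha); last first.
  by move=> b Cb /=; have := Hze b y Cb Oy; lra.
move=> x x' eps e0 Hx /=.
have Lx i : `|lsubmx (x - x') 0 i| <= eps by rewrite mxE entB ltW.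
have hA : `|(x - x') 0 (rshift k ord0)| <= eps by rewrite entB ltW.
rewrite (_ : _ - _ = (x - x') 0 (rshift k ord0) - dotv w0 (lsubmx (x - x'))
    - dotv ze (lsubmx (x - x'))); last by rewrite /gap !lsubmxB !dotvBr !mxE; ring.
have hB := dotv_bound w0 Lx; have hC := dotv_bound ze Lx.
have := ler_normB ((x - x') 0 (rshift k ord0) - dotv w0 (lsubmx (x - x')))
  (dotv ze (lsubmx (x - x'))).
have := ler_normB ((x - x') 0 (rshift k ord0)) (dotv w0 (lsubmx (x - x'))).
lra.
Qed.

Let closure_CO ze :
  (forall a y, eclosure CE a -> CO y -> dotv ze (lsubmx a - y) <= gap a) ->
  forall a y, eclosure CE a -> eclosure CO y -> dotv ze (lsubmx a - y) <= gap a.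
Proof.
move=> Hze a y Ha Oy.
suff : 0 <= gap a - dotv ze (lsubmx a - y) by lra.
have K0 : 0 <= \sum_i `|ze 0 i| by rewrite sumr_ge0.
apply: (ecl_ext (g := fun y => gap a - dotv ze (lsubmx a - y)) K0 _ _ Oy); last first.
  by move=> b Cb /=; have := Hze a b Ha Cb; lra.
move=> x x' eps e0 Hx /=.
rewrite (_ : _ - _ = dotv ze (x - x')); last by rewrite !dotvBr; ring.
by rewrite mulrC; apply: dotv_bound => i; rewrite entB ltW.
Qed.

Lemma epigraph_separation_core : exists ze, forall a y, epi f a -> O y ->
  dotv ze (lsubmx a - y) <= rsubmx a 0 0 - c - dotv w0 (lsubmx a).
Proof.
have [ze Hze] := convex_relation_separation G_convex G_zero G_opp.
exists ze => a y Ea Oy; apply: closure_CO (epi_CE Ea) (O_CO Oy).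
by apply: closure_CE => b x Cb Ox; apply: Hze; exists b, x.
Qed.

End EpigraphSeparation.

Lemma epigraph_separation (R : realType) k (f : 'rV[R]_k -> \bar R)
    (O : set 'rV[R]_k) w0 c :
  (forall z, (-oo < f z)%E) -> nearly_convex_fun f -> nearly_convex O ->
  (ri (dom f) `&` ri O) !=set0 ->
  (forall z, O z -> ((c + dotv w0 z)%:E <= f z)%E) ->
  exists ze, forall a y, epi f a -> O y ->
    dotv ze (lsubmx a - y) <= rsubmx a 0 0 - c - dotv w0 (lsubmx a).
Proof.
move=> f_gtNy [CE [cCE [CEf fCE]]] [CO [cCO [COO OCO]]] [z0 [riD riO]] f_minor.
exact: (epigraph_separation_core f_gtNy f_minor cCE CEf fCE cCO COO OCO riD riO).
Qed.

Section ValueFunction.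
Variables (R : realType) (n p : nat).
Variables (f : 'rV[R]_(n + p) -> \bar R) (F : 'rV[R]_n -> set 'rV[R]_p).
Variables (xb : 'rV[R]_n) (yb : 'rV[R]_p) (m : R).
Hypotheses (mu_xb : mu f F xb = m%:E) (f_zb : f (row_mx xb yb) = m%:E).

Lemma subdiff_mu_of_coderiv u v d :
  subdiff f (row_mx xb yb) (row_mx u v) -> coderiv F xb yb v d ->
  subdiff (mu f F) xb (u + d).
Proof.
move=> Hs Hd z; rewrite mu_xb leeBrDr // -EFinD /mu.
apply/ereal_infP => _ [y Fzy <-].
have E : row_mx z y - row_mx xb yb = row_mx (z - xb) (y - yb).
  by rewrite opp_row_mx add_row_mx.
have := Hd _ (gph_row_mx Fzy); rewrite E dotv_row_mx dotvNl => Hnormal.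
have := Hs (row_mx z y); rewrite E dotv_row_mx f_zb leeBrDr // -EFinD => Hsub.
by apply: le_trans Hsub; rewrite lee_fin dotvDl; lra.
Qed.

Lemma subdiff_mu_minorant w : subdiff (mu f F) xb w ->
  forall z, gph F z -> ((m + dotv w (lsubmx z - xb))%:E <= f z)%E.
Proof.
move=> Hw z Gz.
have mu_f : (mu f F (lsubmx z) <= f z)%E.
  by apply: ereal_inf_lbound; exists (rsubmx z); rewrite ?hsubmxK.
by apply: le_trans mu_f; rewrite addrC EFinD -leeBrDr // -mu_xb; exact: Hw.
Qed.

Hypotheses (F_xb_yb : F xb yb) (f_gtNy : forall z, (-oo < f z)%E).
Hypotheses (ncf : nearly_convex_fun f) (ncF : nearly_convex_map F).
Hypothesis qualification : (ri (dom f) `&` ri (gph F)) !=set0.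

(* Conversely, separate epi f from gph F above the minorant given by w:
   the separating vector ze yields the subgradient ze + (w, 0) of f and the
   normal vector -ze to gph F. *)
Lemma coderiv_of_subdiff_mu w : subdiff (mu f F) xb w ->
  exists u v, subdiff f (row_mx xb yb) (row_mx u v) /\
    exists2 d, coderiv F xb yb v d & w = u + d.
Proof.
move=> Hw; pose w0 : 'rV[R]_(n + p) := row_mx w 0.
have w0E z : dotv w0 z = dotv w (lsubmx z).
  by rewrite dotv_split row_mxKl row_mxKr dotv0l addr0.
have minor z : gph F z -> ((m - dotv w xb + dotv w0 z)%:E <= f z)%E.
  have -> : m - dotv w xb + dotv w0 z = m + dotv w (lsubmx z - xb).
    by rewrite w0E dotvBr; ring.
  exact: subdiff_mu_minorant.
have [ze Hze] := epigraph_separation f_gtNy ncf ncF qualification minor.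
exists (lsubmx ze + w), (rsubmx ze); split.
  move=> z; rewrite f_zb leeBrDr //.
  have -> : row_mx (lsubmx ze + w) (rsubmx ze) = ze + w0.
    by rewrite /w0 -[rsubmx ze in LHS]addr0 -add_row_mx hsubmxK.
  case Ez: (f z) => [r| |]; last 2 first.
  - by rewrite leey.
  - by have := f_gtNy z; rewrite Ez.
  have Ea : epi f (row_mx z (const_mx r)) by apply: epi_row_mx; rewrite Ez.
  have := Hze _ _ Ea (gph_row_mx F_xb_yb).
  rewrite -EFinD lee_fin dotvDl !w0E !lsubmxB !row_mxKl row_mxKr mxE !dotvBr.
  lra.
exists (- lsubmx ze); last by rewrite addrAC subrr add0r.
rewrite /coderiv /normal_cone /= => y Gy.
rewrite (_ : row_mx (- lsubmx ze) (- rsubmx ze) = - ze); last first.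
  by rewrite -opp_row_mx hsubmxK.
have Ea : epi f (row_mx (row_mx xb yb) (const_mx m)) by apply: epi_row_mx; rewrite f_zb.
have := Hze _ _ Ea Gy.
rewrite w0E !row_mxKl row_mxKr mxE dotvNl !dotvBr; lra.
Qed.

End ValueFunction.

Unset Implicit Arguments.

Theorem theorem5p3 (R : realType) (n p : nat)
    (f : 'rV[R]_(n + p) -> \bar R) (F : 'rV[R]_n -> set 'rV[R]_p)
    (xb : 'rV[R]_n) (yb : 'rV[R]_p) :
  proper_fun f -> nearly_convex_fun f -> nearly_convex_map F ->
  (ri (dom f) `&` ri (gph F)) !=set0 ->
  mu f F xb \is a fin_num ->
  solmap f F xb !=set0 ->
  solmap f F xb yb ->
  subdiff (mu f F) xb =
    [set w | exists u v, subdiff f (row_mx xb yb) (row_mx u v) /\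
                         exists2 d, coderiv F xb yb v d & w = u + d].
Proof.
move=> [_ f_gtNy] ncf ncF qualification mu_fin _ [F_xb_yb f_yb].
have mu_xb : mu f F xb = (fine (mu f F xb))%:E by rewrite fineK.
have f_zb : f (row_mx xb yb) = (fine (mu f F xb))%:E by rewrite f_yb fineK.
apply/seteqP; split=> [w Hw|_ [u [v [Hs [d Hd ->]]]]].
- exact: coderiv_of_subdiff_mu mu_xb f_zb F_xb_yb f_gtNy ncf ncF qualification w Hw.
- exact: subdiff_mu_of_coderiv mu_xb f_zb u v d Hs Hd.
Qed.
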